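(* Let $\mathsf{K}$ be a non-trivial filter class of structures contained in $\mathsf{DL}_\infty$. Then either $\mathsf{DL}_\omega\subseteq\mathsf{K}$, or $\mathsf{K}=\mathsf{DL}_n$ for some $n\in\{0,1,2,\dots\}$. Consequently, the only non-trivial proper finitary filter classes contained in $\mathsf{DL}_\infty$ are the classes $\mathsf{DL}_n$, $n\in\{0,1,2,\dots\}$.
   Context: A structure is a pair $\langle\mathbf{A},F\rangle$ with $\mathbf{A}$ an algebra and $F\subseteq\mathbf{A}$; here $\mathbf{A}$ ranges over distributive lattices (signature $\wedge,\vee$). A homomorphism $h\colon\langle\mathbf{A},F\rangle\to\langle\mathbf{B},G\rangle$ is strict if $F=h^{-1}[G]$. Substructures are $\langle\mathbf{B},F\cap\mathbf{B}\rangle$ for subalgebras $\mathbf{B}$; the product of $\langle\mathbf{A}_i,F_i\rangle$ is $\langle\prod\mathbf{A}_i,\prod F_i\rangle$. A filter class is a class of such structures closed under isomorphism, substructures, products and strict homomorphic preimages (i.e. $\langle\mathbf{A},F\rangle$ such that some surjective strict homomorphism maps it onto a member); it is finitary if also closed under ultraproducts, and trivial if all its members $\langle\mathbf{A},F\rangle$ have $F=\mathbf{A}$. For a set $X$, $Y\subseteq_n X$ means $Y$ non-empty, $Y\subseteq X$, $|Y|\le n$. An $n$-filter ($n\ge1$) on a lattice is an upset $F$ such that for every non-empty finite $X\subseteq F$, if $\bigwedge Y\in F$ for all $Y\subseteq_nX$ then $\bigwedge X\in F$; a $0$-filter is either $\emptyset$ or the whole lattice. $\mathsf{DL}_\infty$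 is the class of all $\langle\mathbf{L},F\rangle$ with $\mathbf{L}$ a distributive lattice and $F$ an upset; $\mathsf{DL}_n$ is its subclass where $F$ is an $n$-filter. An upset of a distributive lattice $\mathbf{L}$ is residually finite if it is an intersection of sets $h^{-1}[G]$ with $h\colon\mathbf{L}\to\mathbf{M}$ a lattice homomorphism into a finite distributive lattice and $G$ an upset of $\mathbf{M}$; $\mathsf{DL}_\omega$ is the subclass of $\mathsf{DL}_\infty$ where $F$ is residually finite. *)

From HB Require Import structures.
From mathcomp Require Import all_boot all_order.
Set Implicit Arguments. Unset Strict Implicit. Unset Printing Implicit Defensive.
Local Open Scope order_scope.

Definition fclass :=
  forall (d : Order.disp_t) (L : distrLatticeType d), (L -> Prop) -> Prop.

Definition lhom d1 d2 (A : distrLatticeType d1) (B : distrLatticeType d2)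
  (h : A -> B) : Prop :=
  forall x y : A, h (x `&` y) = h x `&` h y /\ h (x `|` y) = h x `|` h y.

Definition iso_closed (K : fclass) : Prop :=
  forall d1 (A : distrLatticeType d1) (F : A -> Prop)
         d2 (B : distrLatticeType d2) (h : A -> B),
    lhom h -> bijective h -> K _ A F ->
    K _ B (fun b => exists a, h a = b /\ F a).

(* closure under substructures (up to isomorphism: B embeds into A) *)
Definition sub_closed (K : fclass) : Prop :=
  forall d1 (A : distrLatticeType d1) (F : A -> Prop)
         d2 (B : distrLatticeType d2) (e : B -> A),
    lhom e -> injective e -> K _ A F -> K _ B (fun b => F (e b)).

(* closure under products: B with projections p_i forming a product of the A_i
   (jointly injective and jointly surjective), with the product filter *)
Definition prod_closed (K : fclass) : Prop :=
  forall (I : Type) (d : I -> Order.disp_t) (A : forall i, distrLatticeType (d i))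
         (F : forall i, A i -> Prop),
    (forall i, K _ (A i) (F i)) ->
    forall dB (B : distrLatticeType dB) (p : forall i, B -> A i),
      (forall i, lhom (p i)) ->
      (forall b b' : B, (forall i, p i b = p i b') -> b = b') ->
      (forall a : forall i, A i, exists b : B, forall i, p i b = a i) ->
      K _ B (fun b => forall i, F i (p i b)).

Definition preimage_closed (K : fclass) : Prop :=
  forall d1 (A : distrLatticeType d1) d2 (B : distrLatticeType d2)
         (G : B -> Prop) (h : A -> B),
    lhom h -> (forall b, exists a, h a = b) -> K _ B G ->
    K _ A (fun a => G (h a)).

Definition filter_class (K : fclass) : Prop :=
  [/\ iso_closed K, sub_closed K, prod_closed K & preimage_closed K].

Definition ultrafilter (I : Type) (U : (I -> Prop) -> Prop) : Prop :=
  [/\ U (fun _ => True), ~ U (fun _ => False),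
      (forall X Y : I -> Prop, U X -> (forall i, X i -> Y i) -> U Y),
      (forall X Y : I -> Prop, U X -> U Y -> U (fun i => X i /\ Y i)) &
      (forall X : I -> Prop, U X \/ U (fun i => ~ X i))].

(* closure under ultraproducts: B is (up to isomorphism) the ultraproduct
   prod_i A_i / U, given by a surjective homomorphism h from the product
   whose kernel is the U-congruence; the filter is the ultraproduct filter *)
Definition ultraprod_closed (K : fclass) : Prop :=
  forall (I : Type) (U : (I -> Prop) -> Prop) (d : I -> Order.disp_t)
         (A : forall i, distrLatticeType (d i)) (F : forall i, A i -> Prop),
    ultrafilter U ->
    (forall i, K _ (A i) (F i)) ->
    forall dB (B : distrLatticeType dB) (h : (forall i, A i) -> B),
      (forall a a' : forall i, A i,
          h (fun i => a i `&` a' i) = h a `&` h a' /\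
          h (fun i => a i `|` a' i) = h a `|` h a') ->
      (forall b, exists a, h a = b) ->
      (forall a a', h a = h a' <-> U (fun i => a i = a' i)) ->
      K _ B (fun b => exists a, h a = b /\ U (fun i => F i (a i))).

Definition finitary (K : fclass) : Prop := filter_class K /\ ultraprod_closed K.

Definition trivial_class (K : fclass) : Prop :=
  forall d (L : distrLatticeType d) (F : L -> Prop), K _ L F -> forall x, F x.

Definition subclass (K1 K2 : fclass) : Prop :=
  forall d (L : distrLatticeType d) (F : L -> Prop), K1 _ L F -> K2 _ L F.

Definition same_class (K1 K2 : fclass) : Prop :=
  forall d (L : distrLatticeType d) (F : L -> Prop), K1 _ L F <-> K2 _ L F.

Definition upset d (L : distrLatticeType d) (F : L -> Prop) : Prop :=
  forall x y : L, F x -> x <= y -> F y.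

Definition bigmeet d (L : distrLatticeType d) (x : L) (s : seq L) : L :=
  foldr Order.meet x s.

(* A non-empty finite X is represented by a list x :: s,
   a non-empty Y with |Y| <= n and Y subset of X by a list y :: t with all
   entries in x :: s and (size t).+1 <= n (repetitions do not affect meets). *)
Definition n_filter (n : nat) d (L : distrLatticeType d) (F : L -> Prop) : Prop :=
  match n with
  | 0 => (forall x, ~ F x) \/ (forall x, F x)
  | _ => upset F /\
      forall (x : L) (s : seq L),
        (forall z, z \in x :: s -> F z) ->
        (forall (y : L) (t : seq L),
            y \in x :: s -> (forall z, z \in t -> z \in x :: s) ->
            (size t).+1 <= n -> F (bigmeet y t)) ->
        F (bigmeet x s)
  end.

Definition residually_finite d (L : distrLatticeType d) (F : L -> Prop) : Prop :=
  exists (J : Type) (e : J -> Order.disp_t) (M : forall j, finDistrLatticeType (e j))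
         (h : forall j, L -> M j) (G : forall j, M j -> Prop),
    (forall j, lhom (h j) /\ upset (G j)) /\
    (forall x, F x <-> forall j, G j (h j x)).

Definition DL_inf : fclass := fun d L F => @upset d L F.
Definition DL_n (n : nat) : fclass := fun d L F => @n_filter n d L F.
Definition DL_omega : fclass := fun d L F => @upset d L F /\ @residually_finite d L F.

(* An upset [F] of a distributive lattice is an n-filter iff it satisfies the
   (n+1)-point rule [meet_rule n].  If it does and [a] is not in [F], the
   complement of a maximal ideal containing [a] and avoiding [F] satisfies the
   rule too, hence is covered by [n] filters avoiding that ideal, and the [n]
   prime filters extending them separate [a] from [F] through a homomorphism into
   the Boolean lattice of subsets of an n-set, [F] being the preimage of the
   nonempty subsets.  So a filter class containing this structure contains [DL_n];
   conversely an upset that is not an n-filter embeds the Boolean lattice on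
   [n+1] points so that the upset restricts to its nonempty subsets.  A
   non-trivial filter class is therefore [DL_n] for the least [n] whose
   structure on [n+1] points it misses, or it contains all of them and hence all
   residually finite upsets, upsets of a finite lattice [M] being
   [#|M|+1]-filters.  A finitary class of the second kind contains every upset,
   since an upset is an ultraproduct of the upsets generated by its finite
   subsets, which are n-filters for suitable [n]. *)

From HB Require Import structures.
From mathcomp Require Import all_boot all_order.
From mathcomp Require Import boolp zify.
From mathcomp Require filter classical_sets.
From Stdlib Require Import Classical.
Set Implicit Arguments. Unset Strict Implicit. Unset Printing Implicit Defensive.
Import Order.LTheory.
Local Open Scope order_scope.

Lemma mem_take_drop_nth (T : eqType) (x : T) (s : seq T) i k :
  (k < size s)%N -> k != i -> nth x s k \in take i s ++ drop i.+1 s.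
Proof.
move=> ks; rewrite neq_ltn mem_cat => /orP[ki|ik].
  rewrite -(nth_take _ ki) mem_nth // size_take; case: ifP => // _; lia.
by rewrite -(subnKC ik) -nth_drop mem_nth ?orbT // size_drop; lia.
Qed.

Lemma size_take_drop (T : Type) (s : seq T) i :
  (i < size s)%N -> size (take i s ++ drop i.+1 s) = (size s).-1.
Proof. by move=> lt_i_s; rewrite size_cat size_take size_drop lt_i_s; lia. Qed.

Section MeetRule.
Context {d : Order.disp_t} {L : distrLatticeType d}.
Implicit Types (x y w b : L) (s t Y : seq L) (z : nat -> L) (S : seq nat).

Definition meet_seq Y x := bigmeet (head x Y) (behead Y).

Lemma le_bigmeet w y t : (w <= bigmeet y t) = all (fun u => w <= u) (y :: t).
Proof. by elim: t => [|u t IH] /=; rewrite ?andbT // lexI IH /= andbCA. Qed.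

Lemma meet_seq_le Y x u : u \in Y -> meet_seq Y x <= u.
Proof.
case: Y => // y t uY; have := lexx (meet_seq (y :: t) x).
by rewrite /meet_seq le_bigmeet => /allP; apply.
Qed.

Lemma le_meet_seqP w Y x : Y != [::] ->
  (forall u, u \in Y -> w <= u) -> w <= meet_seq Y x.
Proof. by case: Y => // y t _ H; rewrite /meet_seq le_bigmeet; apply/allP. Qed.

Definition meet_idx b z S := foldr (fun k acc => z k `&` acc) b S.
Definition join_idx b z S := foldr (fun k acc => z k `|` acc) b S.

Lemma le_meet_idx w b z S :
  (w <= meet_idx b z S) = (w <= b) && all (fun k => w <= z k) S.
Proof. by elim: S => [|k S IH] /=; rewrite ?andbT // lexI IH andbCA. Qed.

Lemma join_idx_le w b z S :
  (join_idx b z S <= w) = (b <= w) && all (fun k => z k <= w) S.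
Proof. by elim: S => [|k S IH] /=; rewrite ?andbT // leUx IH andbCA. Qed.

Lemma meet_idx_le b z S k : k \in S -> meet_idx b z S <= z k.
Proof.
by move=> kS; move: (lexx (meet_idx b z S)); rewrite le_meet_idx => /andP[_ /allP]; apply.
Qed.

Lemma le_join_idx b z S k : k \in S -> z k <= join_idx b z S.
Proof.
by move=> kS; move: (lexx (join_idx b z S)); rewrite join_idx_le => /andP[_ /allP]; apply.
Qed.

Lemma le_join_idx_base b z S : b <= join_idx b z S.
Proof. by move: (lexx (join_idx b z S)); rewrite join_idx_le => /andP[]. Qed.

Lemma meet_idx_joinr b c z S :
  meet_idx (b `|` c) (fun k => z k `|` c) S = meet_idx b z S `|` c.
Proof. by elim: S => [|k S IH] //=; rewrite IH joinIl. Qed.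

Lemma join_idx_meetr b c z S :
  join_idx b z S `&` c = join_idx (b `&` c) (fun k => z k `&` c) S.
Proof. by elim: S => [|k S IH] //=; rewrite -IH meetUl. Qed.

(* The seed [z 1] (or [z 0] when [i = 0]) is one of the remaining elements,
   so [meet_but z n i] is the intended meet only when [n > 0]. *)
Definition meet_but z n i :=
  meet_idx (z (if i == 0 then 1 else 0)) z [seq k <- iota 0 n.+1 | k != i].
Definition meet_upto z n := meet_idx (z 0) z (iota 0 n.+1).

Lemma le_meet_but w z n i : (0 < n)%N ->
  (w <= meet_but z n i) <-> (forall k, (k <= n)%N -> k != i -> w <= z k).
Proof.
move=> n0; rewrite le_meet_idx; split.
  case/andP=> _ /allP H k kn ki; apply: H.
  by rewrite mem_filter ki mem_iota.
move=> H; apply/andP; split.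
  by case: (i =P 0) => [i0|/eqP ni]; apply: H; rewrite // ?i0 // eq_sym.
by apply/allP => k; rewrite mem_filter mem_iota => /andP[ki /andP[_ kn]]; apply: H.
Qed.

Lemma le_meet_upto w z n : (w <= meet_upto z n) <-> (forall k, (k <= n)%N -> w <= z k).
Proof.
rewrite le_meet_idx; split.
  by case/andP=> _ /allP H k kn; apply: H; rewrite mem_iota.
move=> H; apply/andP; split; first exact: H.
by apply/allP=> k; rewrite mem_iota => /andP[_ kn]; apply: H.
Qed.

Lemma meet_upto_le z n k : (k <= n)%N -> meet_upto z n <= z k.
Proof. by move=> kn; move: (lexx (meet_upto z n)); rewrite le_meet_upto => /(_ k kn). Qed.

Lemma meet_but_le z n i k : (0 < n)%N -> (k <= n)%N -> k != i -> meet_but z n i <= z k.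
Proof.
by move=> n0 kn ki; move: (lexx (meet_but z n i)); rewrite le_meet_but // => /(_ k kn ki).
Qed.

(* The n-filter condition on sets of size [n+1] only; it suffices by [nfilterP]. *)
Definition meet_rule n (F : L -> Prop) : Prop :=
  forall z, (forall i, (i <= n)%N -> F (meet_but z n i)) -> F (meet_upto z n).

End MeetRule.

Lemma map_iota_miss (T : eqType) (z : nat -> T) m (Y : seq T) :
  {subset Y <= [seq z k | k <- iota 0 m]} -> (size Y < m)%N ->
  exists2 i, (i < m)%N & forall u, u \in Y -> exists k, [/\ (k < m)%N, k != i & u = z k].
Proof.
set X := [seq z k | k <- iota 0 m] => YX ltYm.
have sX : size X = m by rewrite size_map size_iota.
have : ~~ all (fun i => i \in [seq index u X | u <- Y]) (iota 0 m).
  apply/negP => /allP sub; have := uniq_leq_size (iota_uniq 0 m) sub.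
  by rewrite size_map size_iota leqNgt ltYm.
case/allPn => i; rewrite mem_iota /= => lt_im iY; exists i => // u uY.
have kX : (index u X < m)%N by rewrite -sX index_mem YX.
exists (index u X); split => //; first by apply: contraNneq iY => <-; apply: map_f.
by have := nth_index (z 0) (YX u uY); rewrite (nth_map 0) ?size_iota // nth_iota.
Qed.

Section NFilterRule.
Context {d : Order.disp_t} {L : distrLatticeType d}.
Implicit Types (F : L -> Prop).

Lemma nfilter_meet_rule n F : n_filter n.+1 F -> meet_rule n.+1 F.
Proof.
case=> up HX z Hz.
set X := [seq z k | k <- iota 0 n.+2].
have zX k : (k < n.+2)%N -> z k \in X by move=> kn; apply: map_f; rewrite mem_iota.
have XF u : u \in X -> F u.
  case/mapP=> k; rewrite mem_iota /= => kn ->; pose i := (k == 0 : nat).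
  apply: (up (meet_but z n.+1 i)); first by apply: Hz; rewrite /i; case: (k == 0).
  by apply: meet_but_le; rewrite // /i; case: (k).
apply: (up (meet_seq X (z 0))); last first.
  by apply/le_meet_upto => k kn; apply/meet_seq_le/zX.
apply: (HX (z 0) [seq z k | k <- iota 1 n.+1] XF) => y t yX tX st.
have YX : {subset y :: t <= X} by move=> u; rewrite inE => /orP[/eqP->|/tX].
have [i lt_in Yi] := map_iota_miss YX st.
apply: (up (meet_but z n.+1 i)); first exact: Hz.
apply: (@le_meet_seqP _ _ _ (y :: t) y) => // u /Yi[k [kn ki ->]].
exact: meet_but_le.
Qed.

Lemma meet_rule_nfilter n F : upset F -> meet_rule n.+1 F -> n_filter n.+1 F.
Proof.
move=> up R; split => // x s XF HY; set N := n.+1; set X := x :: s.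
suff meetY : forall m Y, (size Y <= m)%N -> Y != [::] -> {subset Y <= X} ->
    F (meet_seq Y x) by exact: (meetY _ X (leqnn _)).
elim=> [|m IH] Y sY Y0 YX; first by case: Y sY Y0 {YX}.
case: (leqP (size Y) N) => [Yle|Ygt].
  case: Y sY Y0 YX Yle => // y t _ _ YX Yle.
  apply: HY; [exact: YX (mem_head _ _) | | exact: Yle].
  by move=> u ut; apply: YX; rewrite inE ut orbT.
(* Split [Y] as its first [N] entries and the meet of the rest; each meet of
   [N] of these [N+1] elements is bounded below by [Y] minus one entry. *)
pose z k := if (k < N)%N then nth x Y k else meet_seq (drop N Y) x.
have dN0 : drop N Y != [::] by rewrite -size_eq0 size_drop subn_eq0 -ltnNge.
have Yz k : (k <= N)%N -> meet_seq Y x <= z k.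
  rewrite /z leq_eqVlt => /orP[/eqP->|kN]; rewrite ?ltnn ?kN.
    by apply: le_meet_seqP => // u /mem_drop; apply: meet_seq_le.
  by apply/meet_seq_le/mem_nth/(ltn_trans kN).
apply: (up (meet_upto z N)); last first.
  apply: le_meet_seqP => // u uY; have := nth_index x uY; set k := index u Y.
  have kY : (k < size Y)%N by rewrite index_mem.
  case: (ltnP k N) => kN <-.
    by apply: le_trans (meet_upto_le z (ltnW kN)) _; rewrite /z kN.
  apply: le_trans (meet_upto_le z (leqnn N)) _; rewrite /z ltnn; apply: meet_seq_le.
  by rewrite -(subnKC kN) -nth_drop mem_nth // size_drop; lia.
apply: R => i iN; set Yi := take i Y ++ drop i.+1 Y.
have iY : (i < size Y)%N by apply: leq_ltn_trans Ygt.
have sYi : size Yi = (size Y).-1 by apply: size_take_drop.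
apply: (up (meet_seq Yi x)).
  apply: IH; first by rewrite sYi; lia.
    by rewrite -size_eq0 sYi; lia.
  by move=> u; rewrite mem_cat => /orP[/mem_take|/mem_drop]; apply: YX.
apply/le_meet_but => // k kN ki; rewrite /z; case: ifP => [kN'|].
  by apply/meet_seq_le/mem_take_drop_nth => //; apply: leq_trans Ygt.
move/negbT; rewrite -leqNgt => Nk; have ik : (i < N)%N by rewrite ltn_neqAle iN andbT; lia.
apply: le_meet_seqP => // u uD; apply: meet_seq_le; rewrite mem_cat; apply/orP; right.
by move: uD; rewrite -(subnK ik) -drop_drop => /mem_drop.
Qed.

Lemma nfilterP n F : n_filter n.+1 F <-> upset F /\ meet_rule n.+1 F.
Proof.
split=> [nF|[]]; last exact: meet_rule_nfilter.
by split; [case: nF | exact: nfilter_meet_rule].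
Qed.

End NFilterRule.

Record dl_laws (T : Type) (m j : T -> T -> T) : Prop := DLLaws {
  dl_mC : forall x y, m x y = m y x; dl_jC : forall x y, j x y = j y x;
  dl_mA : forall x y z, m x (m y z) = m (m x y) z;
  dl_jA : forall x y z, j x (j y z) = j (j x y) z;
  dl_mK : forall x y, m x (j x y) = x; dl_jK : forall x y, j x (m x y) = x;
  dl_mD : forall x y z, m (j x y) z = j (m x z) (m y z) }.

(* A copy of [T] carrying the distributive lattice structure given by [m] and [j]. *)
Definition dl_of (T : Type) (m j : T -> T -> T) (H : dl_laws m j) : Type := T.

Section DLOf.
Variables (T : Type) (m j : T -> T -> T) (H : dl_laws m j).
HB.instance Definition _ := gen_eqMixin (dl_of H).
HB.instance Definition _ := gen_choiceMixin (dl_of H).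
Let m' : dl_of H -> dl_of H -> dl_of H := m.
Let j' : dl_of H -> dl_of H -> dl_of H := j.
Let mxx : idempotent_op m'.
Proof. by move=> x; have := dl_mK H x (m x x); rewrite (dl_jK H). Qed.
Let mC : commutative m'. Proof. exact: (dl_mC H). Qed.
Let jC : commutative j'. Proof. exact: (dl_jC H). Qed.
Let mA : associative m'. Proof. exact: (dl_mA H). Qed.
Let jA : associative j'. Proof. exact: (dl_jA H). Qed.
Let mK y x : m' x (j' x y) = x. Proof. exact: (dl_mK H x y). Qed.
Let jK y x : j' x (m' x y) = x. Proof. exact: (dl_jK H x y). Qed.
Let mD : left_distributive m' j'. Proof. exact: (dl_mD H). Qed.
HB.instance Definition _ :=
  @Order.isMeetJoinDistrLattice.Build (Order.Disp tt tt) (dl_of H)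
  (fun x y => m' x y == x) (fun x y => (y != x) && (m' x y == x)) m' j'
  (fun _ _ => erefl) (fun _ _ => erefl) mC jC mA jA mK jK mD mxx.
End DLOf.

Lemma sig_eq T (P : T -> Prop) (a b : {x | P x}) : sval a = sval b -> a = b.
Proof. by case: a b => a pa [b pb] /= ab; apply: eq_exist. Qed.

Section ProdDL.
Variables (I : Type) (dI : I -> Order.disp_t) (A : forall i, distrLatticeType (dI i)).

Lemma prod_dl_laws :
  dl_laws (fun f g : forall i, A i => fun i => f i `&` g i) (fun f g i => f i `|` g i).
Proof.
split=> *; apply: functional_extensionality_dep => i.
- exact: meetC. - exact: joinC. - exact: meetA. - exact: joinA.
- exact: joinKI. - exact: meetKU. - exact: meetUl.
Qed.

Definition prod_dl := dl_of prod_dl_laws.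

Lemma prod_meetE (f g : prod_dl) i : (f `&` g) i = f i `&` g i. Proof. by []. Qed.
Lemma prod_joinE (f g : prod_dl) i : (f `|` g) i = f i `|` g i. Proof. by []. Qed.
End ProdDL.

Section SubDL.
Variables (T : Type) (m j : T -> T -> T) (H : dl_laws m j) (P : T -> Prop).
Hypotheses (Pm : forall a b, P a -> P b -> P (m a b))
  (Pj : forall a b, P a -> P b -> P (j a b)).

Definition sub_meet (a b : {x | P x}) := exist P (m (sval a) (sval b)) (Pm (svalP a) (svalP b)).
Definition sub_join (a b : {x | P x}) := exist P (j (sval a) (sval b)) (Pj (svalP a) (svalP b)).

Lemma sub_dl_laws : dl_laws sub_meet sub_join.
Proof.
split=> *; apply: sig_eq; rewrite /sub_meet /sub_join /=.
- exact: (dl_mC H). - exact: (dl_jC H). - exact: (dl_mA H). - exact: (dl_jA H).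
- exact: (dl_mK H). - exact: (dl_jK H). - exact: (dl_mD H).
Qed.

Definition sub_dl := dl_of sub_dl_laws.
End SubDL.

Lemma class_ext (K : fclass) d (L : distrLatticeType d) (F G : L -> Prop) :
  K _ L F -> (forall x, F x <-> G x) -> K _ L G.
Proof.
move=> KF FG; suff -> : G = F by [].
by apply: funext => x; apply: propext; split => /FG.
Qed.

(* Embed [L] into the product through the family [h], take the image as a
   substructure and pull back along the surjection of [L] onto it. *)
Lemma filter_class_subdirect (K : fclass) : filter_class K ->
  forall (I : Type) (dI : I -> Order.disp_t) (A : forall i, distrLatticeType (dI i))
    (F : forall i, A i -> Prop), (forall i, K _ (A i) (F i)) ->
  forall d (L : distrLatticeType d) (h : forall i, L -> A i), (forall i, lhom (h i)) ->
  K _ L (fun x => forall i, F i (h i x)).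
Proof.
case=> _ subK prodK preK I dI A F KA d L h hh.
have KP : K _ (prod_dl A) (fun f => forall i, F i (f i)).
  apply: (prodK I dI A F KA _ (prod_dl A) (fun i f => f i)) => //.
    by move=> b b' e; apply: functional_extensionality_dep.
  by move=> a; exists a.
pose hx (x : L) : prod_dl A := fun i => h i x.
have hxI x y : hx (x `&` y) = hx x `&` hx y.
  by apply: functional_extensionality_dep => i; rewrite /hx (proj1 (hh i x y)).
have hxU x y : hx (x `|` y) = hx x `|` hx y.
  by apply: functional_extensionality_dep => i; rewrite /hx (proj2 (hh i x y)).
pose P f := exists x, hx x = f.
have Pm a b : P a -> P b -> P (a `&` b) by move=> [x <-] [y <-]; exists (x `&` y).
have Pj a b : P a -> P b -> P (a `|` b) by move=> [x <-] [y <-]; exists (x `|` y).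
pose S := sub_dl (prod_dl_laws A) Pm Pj.
have KS : K _ S (fun s => forall i, F i (sval s i)).
  by apply: (subK _ (prod_dl A) _ _ S (fun s => sval s)) KP => // a b /sig_eq.
apply: (preK _ L _ S _ (fun x => exist P (hx x) (ex_intro _ x erefl)) _ _ KS).
  by move=> x y; split; apply: sig_eq => /=.
by move=> [f [x e]]; exists x; apply: sig_eq.
Qed.

Lemma filter_class_full (K : fclass) d (L : distrLatticeType d) :
  filter_class K -> K _ L (fun _ => True).
Proof.
move=> fK; have := @filter_class_subdirect K fK False (fun _ => d) (fun _ => L)
  (fun _ _ => True) (fun i => match i with end) _ L
  (fun i => match i with end) (fun i => match i with end).
by move/class_ext; apply => x; split => // _ [].
Qed.

Lemma filter_class_empty (K : fclass) d (A : distrLatticeType d) (F : A -> Prop) c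
    d' (L : distrLatticeType d') :
  filter_class K -> K _ A F -> ~ F c -> K _ L (fun _ => False).
Proof.
move=> fK KA Fc; have := @filter_class_subdirect K fK unit (fun _ => d) (fun _ => A)
  (fun _ => F) (fun _ => KA) _ L (fun _ _ => c)
  (fun _ x y => conj (esym (meetxx c)) (esym (joinxx c))).
by move/class_ext; apply => x; split => // /(_ tt).
Qed.

Lemma zorn_union (T : Type) (P : (T -> Prop) -> Prop) (X0 : T -> Prop) : P X0 ->
  (forall C : (T -> Prop) -> Prop, (exists X, C X) -> (forall X, C X -> P X) ->
     (forall X Y, C X -> C Y -> (forall t, X t -> Y t) \/ (forall t, Y t -> X t)) ->
     P (fun t => exists X, C X /\ X t)) ->
  exists M, P M /\ forall X, P X -> (forall t, M t -> X t) -> forall t, X t -> M t.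
Proof.
move=> PX0 Hch.
(* [Zorn_bigcup] also feeds us the empty chain, whose union [set0] we admit. *)
pose P' (A : classical_sets.set T) := A = classical_sets.set0 \/ P A.
have [A [PA Amax]] : exists A, P' A /\ forall B, classical_sets.proper A B -> ~ P' B.
  apply: classical_sets.Zorn_bigcup => F FP Ftot.
  case: (pselect (exists X, F X /\ P X)) => [[X [FX PX]]|noP].
  - right.
    have -> : classical_sets.bigcup F id = (fun t => exists X, (F X /\ P X) /\ X t).
      apply: funext => t; apply: propext; split.
      + case=> Y FY Yt; exists Y; split => //; split => //.
        by case: (FP Y FY) => // e; rewrite e in Yt.
      + by case=> Y [[FY _] Yt]; exists Y.
    apply: Hch.
    + by exists X.
    + by move=> Y [].
    + move=> Y Z [FY _] [FZ _].
      by case: (Ftot Y Z FY FZ) => h; [left|right] => t; apply: h.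
  - left; apply: funext => t; apply: propext; split => // -[Y FY Yt].
    case: (FP Y FY) => e; first by rewrite e in Yt.
    by exfalso; apply: noP; exists Y.
have Amaximal X : P X -> (forall t, A t -> X t) -> forall t, X t -> A t.
  move=> PX AX t Xt; apply: NNPP => nAt; apply: (Amax X); last by right.
  by split; [exact: AX | move=> XA; apply: nAt; apply: XA].
exists A; split => //; case: PA => // A0.
suff <- : X0 = A by [].
apply: funext => t; apply: propext; split; last by rewrite A0.
by apply: Amaximal => // s; rewrite A0.
Qed.

Definition closed_under T (R : T -> T -> Prop) (op : T -> T -> T) (X : T -> Prop) :=
  (forall x y, X x -> R x y -> X y) /\ (forall x y, X x -> X y -> X (op x y)).

Lemma chain_union_closed T R op (C : (T -> Prop) -> Prop) :
  (forall X, C X -> closed_under R op X) ->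
  (forall X Y, C X -> C Y -> (forall t, X t -> Y t) \/ (forall t, Y t -> X t)) ->
  closed_under R op (fun t => exists X, C X /\ X t).
Proof.
move=> CR Ctot; split.
  by move=> x y [X [CX Xx]] xy; exists X; split => //; apply: (proj1 (CR X CX)) xy.
move=> x y [X [CX Xx]] [Y [CY Yy]].
have [XY|YX] := Ctot X Y CX CY.
  by exists Y; split => //; apply: (proj2 (CR Y CY)) => //; apply: XY.
by exists X; split => //; apply: (proj2 (CR X CX)) => //; apply: YX.
Qed.

Section Ideals.
Context {d : Order.disp_t} {L : distrLatticeType d}.
Implicit Types (F I : L -> Prop) (a b x y : L) (z : nat -> L).

Definition ideal I :=
  (forall x y, I x -> y <= x -> I y) /\ (forall x y, I x -> I y -> I (x `|` y)).
Definition lfilter F := upset F /\ (forall x y, F x -> F y -> F (x `&` y)).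

Lemma maximal_ideal_disjoint F a : upset F -> ~ F a ->
  exists I, [/\ ideal I, I a, (forall x, I x -> ~ F x) &
                (forall x, ~ I x -> exists i, I i /\ F (x `|` i))].
Proof.
move=> up Fa.
pose P I := [/\ ideal I, I a & forall x, I x -> ~ F x].
have [||I [[idI Ia dis] Imax]] := @zorn_union _ P (fun y => y <= a).
- split; first split.
  + by move=> x y xa yx; apply: le_trans xa.
  + by move=> x y xa ya; rewrite leUx xa ya.
  + by [].
  + by move=> x xa Fx; apply: Fa; apply: up xa.
- move=> C [X CX] CP Ctot; split.
  + by apply: chain_union_closed Ctot => Y /CP[].
  + by exists X; split => //; case: (CP X CX).
  + by move=> x [Y [CY Yx]]; case: (CP Y CY) => _ _; apply.
exists I; split => // x nIx; apply: NNPP => nex.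
(* Otherwise the ideal generated by [I] and [x] would still avoid [F]. *)
pose J y := exists i, I i /\ y <= x `|` i.
apply: nIx; apply: (Imax J); last by exists a; split => //; apply: leUl.
- split; first split.
  + by move=> y z [i [Ii yi]] zy; exists i; split => //; apply: le_trans yi.
  + move=> y z [i [Ii yi]] [j [Ij zj]]; exists (i `|` j); split.
      by case: idI => _; apply.
    rewrite leUx; apply/andP; split.
      by apply: le_trans yi _; apply: leU2 => //; apply: leUl.
    by apply: le_trans zj _; apply: leU2 => //; apply: leUr.
  + by exists a; split => //; apply: leUr.
  + move=> y [i [Ii yi]] Fy; apply: nex; exists i; split => //.
    exact: up yi.
- by move=> t It; exists t; split => //; apply: leUr.
Qed.

Lemma ideal_join_idx I b z S : ideal I -> I b -> (forall k, k \in S -> I (z k)) ->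
  I (join_idx b z S).
Proof.
move=> [_ jI] Ib; elim: S => [|k S IH] //= H.
apply: jI; first by apply: H; rewrite mem_head.
by apply: IH => k' k'S; apply: H; rewrite inE k'S orbT.
Qed.

Lemma lfilter_meet_idx F b z S : lfilter F -> F b -> (forall k, k \in S -> F (z k)) ->
  F (meet_idx b z S).
Proof.
move=> [_ mF] Fb; elim: S => [|k S IH] //= H.
apply: mF; first by apply: H; rewrite mem_head.
by apply: IH => k' k'S; apply: H; rewrite inE k'S orbT.
Qed.

Lemma ideal_compl_upset I : ideal I -> upset (fun x => ~ I x).
Proof. by case=> dI _ x y nIx xy Iy; apply: nIx; apply: dI xy. Qed.

(* Enlarging the [n+1] elements by the join [c] of the witnesses given by
   maximality keeps all [n+1] partial meets in [F]. *)
Lemma meet_rule_ideal_compl n F I a : (0 < n)%N -> upset F -> meet_rule n F ->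
  ideal I -> I a -> (forall x, I x -> ~ F x) ->
  (forall x, ~ I x -> exists i, I i /\ F (x `|` i)) ->
  meet_rule n (fun x => ~ I x).
Proof.
move=> n0 up R idI Ia dis mx z Hz Iz.
have ex i : exists c, (i <= n)%N -> I c /\ F (meet_but z n i `|` c).
  case: (leqP i n) => iN; last by exists a.
  by case: (mx _ (Hz i iN)) => c [Ic Fc]; exists c.
pose c i := sval (cid (ex i)).
have cP i : (i <= n)%N -> I (c i) /\ F (meet_but z n i `|` c i).
  by rewrite /c; case: cid.
pose cs := join_idx a c (iota 0 n.+1).
have Ics : I cs.
  by apply: ideal_join_idx => // k; rewrite mem_iota => /andP[_ kn]; case: (cP k kn).
have Fw : F (meet_upto (fun k => z k `|` cs) n).
  apply: R => i iN; apply: (up _ _ (proj2 (cP i iN))).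
  apply/le_meet_but => // k kn ki; apply: leU2; first exact: meet_but_le.
  by apply: le_join_idx; rewrite mem_iota.
rewrite /meet_upto meet_idx_joinr in Fw; apply: (dis _ _ Fw).
by case: idI => _; apply.
Qed.

End Ideals.

Section FilterCover.
Context {d : Order.disp_t} {L : distrLatticeType d}.
Implicit Types (P Q : L -> Prop) (x y : L).
Variable I : L -> Prop.
Hypothesis idI : ideal I.

Definition maximal_disjoint P := [/\ lfilter P, (forall x, P x -> ~ I x) &
  forall Q, lfilter Q -> (forall x, Q x -> ~ I x) -> (forall x, P x -> Q x) ->
    forall x, Q x -> P x].

Definition filter_cover n := exists Phi : nat -> L -> Prop,
  (forall k, lfilter (Phi k) /\ forall x, Phi k x -> ~ I x) /\
  (forall x, ~ I x -> exists2 k, (k < n)%N & Phi k x).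

Lemma maximal_disjoint_ext x : ~ I x -> exists P, maximal_disjoint P /\ P x.
Proof.
move=> nIx; pose PP Q := [/\ lfilter Q, (forall y, Q y -> ~ I y) & Q x].
have [||M [[fM MI Mx] Mmax]] := @zorn_union _ PP (fun y => x <= y).
- split => //; first split.
  + by move=> y z xy yz; apply: le_trans yz.
  + by move=> y z xy xz; rewrite lexI xy xz.
  + by move=> y xy; apply: ideal_compl_upset xy.
- move=> C [X CX] CP Ctot; split.
  + by apply: chain_union_closed Ctot => Y /CP[].
  + by move=> y [Y [CY Yy]]; case: (CP Y CY) => _ YI _; exact: YI.
  + by exists X; split => //; case: (CP X CX).
exists M; split => //; split => // Q fQ QI MQ.
by apply: Mmax => //; split => //; apply: MQ.
Qed.

(* A filter not contained in a maximal one must meet it inside [I]: otherwise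
   the filter generated by both would still avoid [I]. *)
Lemma maximal_disjoint_meet_ideal P Q u0 v0 : maximal_disjoint P -> lfilter Q ->
  P u0 -> Q v0 -> (exists x, Q x /\ ~ P x) -> exists u v, [/\ P u, Q v & I (u `&` v)].
Proof.
move=> [[uP mP] PI Pmax] [uQ mQ] Pu0 Qv0 [x [Qx nPx]]; apply: NNPP => nex.
pose T y := exists u v, [/\ P u, Q v & u `&` v <= y].
apply: nPx; apply: (Pmax T); last by exists u0, x; split => //; apply: leIr.
- split.
  + by move=> y z [u [v [Pu Qv uv]]] yz; exists u, v; split => //; apply: le_trans yz.
  + move=> y z [u [v [Pu Qv uv]]] [u' [v' [Pu' Qv' uv']]].
    exists (u `&` u'), (v `&` v'); split; [exact: mP | exact: mQ |].
    rewrite lexI; apply/andP; split.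
      by apply: le_trans uv; apply: leI2; apply: leIl.
    by apply: le_trans uv'; apply: leI2; apply: leIr.
- move=> y [u [v [Pu Qv uv]]] Iy; apply: nex; exists u, v; split => //.
  by case: idI => dI _; apply: dI uv.
- by move=> y Py; exists y, v0; split => //; apply: leIl.
Qed.

Definition join_but (y : nat -> L) n i :=
  join_idx (y (if i == 0 then 1 else 0)) y [seq j <- iota 0 n.+1 | j != i].

Lemma le_join_but (y : nat -> L) n i k : (k <= n)%N -> k != i -> y k <= join_but y n i.
Proof. by move=> kn ki; apply: le_join_idx; rewrite mem_filter mem_iota ki; lia. Qed.

(* By induction on [m]: the meet of the [join_but y n i], [i <= m], lies below
   an element of [I] joined with [y (m+1)], ..., [y n]. *)
Lemma ideal_meet_join_but n (y : nat -> L) : (0 < n)%N ->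
  (forall i j, (i <= n)%N -> (j <= n)%N -> i != j -> I (y i `&` y j)) ->
  I (meet_upto (join_but y n) n).
Proof.
move=> n0 Iy; case: (idI) => dI jI.
have claim m : (m <= n)%N -> exists c, I c /\ forall w,
    (forall i, (i <= m)%N -> w <= join_but y n i) -> w <= join_idx c y (iota m.+1 (n - m)).
  elim: m => [|m IH] mn.
    exists (y 0 `&` y 1); split; first exact: Iy.
    move=> w Hw; apply: le_trans (Hw 0 (leqnn 0)) _.
    rewrite join_idx_le; apply/andP; split.
      by apply: le_join_idx; rewrite subn0 mem_iota; lia.
    apply/allP => j; rewrite mem_filter mem_iota => /andP[j0 /andP[_ jn']].
    by apply: le_join_idx; rewrite subn0 mem_iota; lia.
  have [c [Ic Hc]] := IH (ltnW mn); set x' := join_but y n m.+1.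
  have Iyx : I (y m.+1 `&` x').
    rewrite meetC /x' /join_but join_idx_meetr; apply: ideal_join_idx => //; first exact: Iy.
    move=> k; rewrite mem_filter mem_iota => /andP[km /andP[_ kn]].
    by apply: Iy; rewrite // -ltnS.
  exists (c `|` (y m.+1 `&` x')); split; first exact: jI.
  move=> w Hw; have : w <= join_idx c y (iota m.+1 (n - m)) `&` x'.
    by rewrite lexI Hc ?Hw // => i im; apply/Hw/ltnW.
  move/le_trans; apply; have -> : (n - m = (n - m.+1).+1)%N by lia.
  rewrite join_idx_meetr /= leUx; apply/andP; split.
    by apply: le_trans (le_join_idx_base _ _ _); apply: leUr.
  rewrite join_idx_le; apply/andP; split.
    by apply: le_trans (le_join_idx_base _ _ _); apply: le_trans (leUl _ _); exact: leIl.
  by apply/allP => k kS; apply: le_trans (le_join_idx _ _ kS); exact: leIl.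
have [c [Ic Hc]] := claim n (leqnn n).
by apply: dI Ic _; rewrite subnn /= in Hc; apply: Hc => i iN; exact: meet_upto_le.
Qed.

Definition distinct_maximal_disjoint (Ps : nat -> L -> Prop) k :=
  (forall i, (i < k)%N -> maximal_disjoint (Ps i) /\ exists x, Ps i x) /\
  (forall i j, (i < j)%N -> (j < k)%N -> exists x, Ps j x /\ ~ Ps i x).

Lemma distinct_maximal_disjoint_ex n k : ~ filter_cover n -> (k <= n.+1)%N ->
  exists Ps, distinct_maximal_disjoint Ps k.
Proof.
move=> ncov; elim: k => [|k IH] kn; first by exists (fun _ _ => False); split.
have [Ps [P1 P2]] := IH (ltnW kn).
pose P' i := if (i < k)%N then Ps i else (fun _ : L => False).
have [x [nIx nx]] : exists x, ~ I x /\ forall i, (i < n)%N -> ~ P' i x.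
  apply: NNPP => nex; apply: ncov; exists P'; split.
    move=> i; rewrite /P'; case: ltnP => ik; last by split => //; split.
    by case: (P1 i ik) => [[fP PI _] _]; split.
  move=> x nIx; apply: NNPP => nk; apply: nex; exists x; split => // i i_n Pix.
  by apply: nk; exists i.
have [T [mT Tx]] := maximal_disjoint_ext nIx.
exists (fun i => if (i < k)%N then Ps i else T); split.
  move=> i; rewrite ltnS leq_eqVlt => /orP[/eqP ->|ik].
    by rewrite ltnn; split => //; exists x.
  by rewrite ik; apply: P1.
move=> i j ij; rewrite ltnS leq_eqVlt => /orP[/eqP jk|jk].
  subst j; rewrite ltnn ij; exists x; split => //.
  by have := nx i; rewrite /P' ij; apply; lia.
by rewrite jk (ltn_trans ij jk); apply: P2.
Qed.

Lemma distinct_maximal_disjoint_pair n Ps i j : distinct_maximal_disjoint Ps n.+1 ->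
  (i <= n)%N -> (j <= n)%N -> i != j -> exists u v, [/\ Ps i u, Ps j v & I (u `&` v)].
Proof.
move=> [P1 P2] iN jN; have [[fi _ _] [ei Pei]] := P1 i iN.
have [[fj _ _] [ej Pej]] := P1 j jN.
case: ltngtP => // [ij|ji] _.
  exact: maximal_disjoint_meet_ideal (proj1 (P1 i iN)) fj Pei Pej (P2 i j ij jN).
have [u [v [Pu Pv Iuv]]] :=
  maximal_disjoint_meet_ideal (proj1 (P1 j jN)) fi Pej Pei (P2 j i ji iN).
by exists v, u; rewrite meetC.
Qed.

(* Meeting, inside the [i]-th filter, the witnesses of all pairs [(i, j)]. *)
Lemma distinct_maximal_disjoint_sep n Ps : distinct_maximal_disjoint Ps n.+1 ->
  exists y : nat -> L, (forall i, (i <= n)%N -> Ps i (y i)) /\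
    (forall i j, (i <= n)%N -> (j <= n)%N -> i != j -> I (y i `&` y j)).
Proof.
move=> dist; have [P1 _] := dist.
have [x0 _] : exists x0 : L, True by case: (P1 0 isT) => _ [x _]; exists x.
have [e eP] : {e : nat -> L & forall i, (i <= n)%N -> Ps i (e i)}.
  apply: (choice (P := fun i e => (i <= n)%N -> Ps i e)) => i.
  case: (leqP i n) => iN; last by exists x0.
  by case: (P1 i iN) => _ [e He]; exists e.
pose C i j (q : L * L) := (i <= n)%N -> (j <= n)%N -> i != j ->
  [/\ Ps i q.1, Ps j q.2 & I (q.1 `&` q.2)].
have Cex i j : exists q, C i j q.
  case: (boolP [&& (i <= n)%N, (j <= n)%N & i != j]) => [/and3P[iN jN ij]|nij].
    by have [u [v]] := distinct_maximal_disjoint_pair dist iN jN ij; exists (u, v).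
  by exists (x0, x0) => iN jN ij; move: nij; rewrite iN jN ij.
have [p pP] : {p : nat -> nat -> L * L & forall i j, C i j (p i j)}.
  apply: (choice (P := fun i f => forall j, C i j (f j))) => i.
  by case: (choice (Cex i)) => f Hf; exists f.
exists (fun i => meet_idx (e i) (fun j => (p i j).1 `&` (p j i).2)
  [seq j <- iota 0 n.+1 | j != i]); split.
  move=> i iN; have [[fP _ _] _] := P1 i iN.
  apply: lfilter_meet_idx => //; first exact: eP.
  move=> k; rewrite mem_filter mem_iota => /andP[ki /andP[_ kn]].
  have ik : i != k by rewrite eq_sym.
  have [a1 _ _] := pP i k iN kn ik; have [_ a2 _] := pP k i kn iN ki.
  by case: fP => _; apply.
move=> i j iN jN ij; have [_ _ I1] := pP i j iN jN ij.
case: idI => dI _; apply: dI I1 _; apply: leI2.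
  apply: le_trans (meet_idx_le _ _ _) _; last exact: leIl.
  by rewrite mem_filter mem_iota eq_sym ij; lia.
apply: le_trans (meet_idx_le _ _ _) _; last exact: leIr.
by rewrite mem_filter mem_iota ij; lia.
Qed.

(* With [y] as above the [join_but y n i] lie outside [I] but their meet does not. *)
Lemma distinct_maximal_disjoint_meet_rule n Ps : (0 < n)%N ->
  meet_rule n (fun x => ~ I x) -> ~ distinct_maximal_disjoint Ps n.+1.
Proof.
move=> n0 RG dist; have [[P1 _] [y [yP Iyy]]] := (dist, distinct_maximal_disjoint_sep dist).
apply: (RG _ _ (ideal_meet_join_but n0 Iyy)) => i iN.
apply: (ideal_compl_upset idI (x := y i)).
  by move=> Iyi; have [[_ PI _] _] := P1 i iN; exact: PI _ (yP i iN) Iyi.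
by apply/le_meet_but => // k kn ki; apply: le_join_but; rewrite // eq_sym.
Qed.

Lemma meet_rule_compl_cover n : (0 < n)%N -> meet_rule n (fun x => ~ I x) ->
  filter_cover n.
Proof.
move=> n0 RG; apply: NNPP => ncov.
have [Ps distinct] := distinct_maximal_disjoint_ex ncov (leqnn n.+1).
exact: distinct_maximal_disjoint_meet_rule n0 RG distinct.
Qed.

End FilterCover.

Import Order.DefaultSetSubsetOrder.

Section Separation.
Context {d : Order.disp_t} {L : distrLatticeType d}.
Implicit Types (F P : L -> Prop) (a x y : L).

Lemma meet_rule1P F : upset F -> meet_rule 1 F <-> forall x y, F x -> F y -> F (x `&` y).
Proof.
move=> up; split => [R x y Fx Fy | mF z Hz].
  pose z k := if k == 0 then x else y.
  apply: (up (meet_upto z 1)); last first.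
    by rewrite lexI (meet_upto_le z (_ : 0 <= 1)%N) // (meet_upto_le z (_ : 1 <= 1)%N).
  apply: R => -[|[|//]] _; [apply: up Fy _ | apply: up Fx _].
    by apply/le_meet_but => // -[|[|//]].
  by apply/le_meet_but => // -[|[|//]].
apply: (up (meet_but z 1 1 `&` meet_but z 1 0)); first by apply: mF; apply: Hz.
apply/le_meet_upto => -[|[|//]] _.
  by apply: le_trans (leIl _ _) _; apply: meet_but_le.
by apply: le_trans (leIr _ _) _; apply: meet_but_le.
Qed.

Lemma prime_filter_lhom P : lfilter P -> (forall x y, P (x `|` y) -> P x \/ P y) ->
  lhom (fun x => `[< P x >]).
Proof.
move=> [up mP] prime x y; split; apply/idP/idP.
- move=> /asboolP Pxy; apply/andP; split; apply/asboolP; apply: up Pxy _.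
    exact: leIl.
  exact: leIr.
- by case/andP => /asboolP Px /asboolP Py; apply/asboolP; apply: mP.
- by move=> /asboolP /prime [Px|Py]; apply/orP; [left|right]; apply/asboolP.
- case/orP => /asboolP Pz; apply/asboolP; apply: up Pz _; [exact: leUl | exact: leUr].
Qed.

(* The complement of a maximal ideal avoiding a filter is a prime filter. *)
Lemma prime_filter_separation P a : lfilter P -> ~ P a ->
  exists h : L -> bool, [/\ lhom h, forall x, P x -> h x & h a = false].
Proof.
move=> fP Pa; have [uP _] := fP.
have [J [idJ Ja dis mx]] := maximal_ideal_disjoint uP Pa.
have upJ := ideal_compl_upset idJ.
have RJ := meet_rule_ideal_compl (ltn0Sn 0) uP ((meet_rule1P uP).2 (proj2 fP)) idJ Ja dis mx.
exists (fun x => `[< ~ J x >]); split.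
- apply: prime_filter_lhom; first by split => //; apply/(meet_rule1P upJ).
  move=> x y nJxy; apply: NNPP => /not_or_and[/NNPP Jx /NNPP Jy].
  by apply: nJxy; case: idJ => _; apply.
- by move=> x Px; apply/asboolP => Jx; exact: dis x Jx Px.
- by apply: asboolF => /(_ Ja).
Qed.

(* Each of the [n] prime filters covering the complement of a maximal ideal
   contributes one coordinate of the homomorphism into the subsets of ['I_n]. *)
Lemma nfilter_separation n F a : (0 < n)%N -> upset F -> meet_rule n F -> ~ F a ->
  exists H : L -> {set 'I_n}, [/\ lhom H, forall x, F x -> H x != set0 & H a = set0].
Proof.
move=> n0 up R Fa.
have [I [idI Ia dis mx]] := maximal_ideal_disjoint up Fa.
have [Phi [PhiP cov]] :=
  meet_rule_compl_cover idI n0 (meet_rule_ideal_compl n0 up R idI Ia dis mx).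
have [h hP] : {h : nat -> L -> bool &
    forall k, [/\ lhom (h k), forall x, Phi k x -> h k x & h k a = false]}.
  apply: (choice (P := fun k (hk : L -> bool) =>
    [/\ lhom hk, forall x, Phi k x -> hk x & hk a = false])).
  move=> k; have [fk kI] := PhiP k; apply: prime_filter_separation fk _.
  by move=> Pa; exact: kI a Pa Ia.
exists (fun x => [set k : 'I_n | h k x]); split.
- move=> x y; split; apply/setP => k; have [hl _ _] := hP k.
    by rewrite in_setI !inE (proj1 (hl x y)).
  by rewrite in_setU !inE (proj2 (hl x y)).
- move=> x Fx; have [k kn Pk] := cov x (fun Ix => dis x Ix Fx).
  apply/set0Pn; exists (Ordinal kn); rewrite inE /=.
  by have [_ hPk _] := hP k; apply: hPk.
- by apply/setP => k; rewrite !inE; have [_ _ ->] := hP k.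
Qed.

End Separation.

(* The structure [<{set 'I_n}, nonempty sets>] generates [DL_n], n > 0. *)
Definition nonempty_set n (T : {set 'I_n}) : Prop := T != set0.

Lemma nonempty_set_upset n : upset (@nonempty_set n).
Proof. by move=> T T' /set0Pn[i iT] /subsetP sub; apply/set0Pn; exists i; apply: sub. Qed.

Lemma finite_upset_nfilter d (M : finDistrLatticeType d) (G : M -> Prop) :
  upset G -> n_filter #|M|.+1 G.
Proof.
move=> up; split => // x s XF H; set U := undup (x :: s).
have U0 : U != [::] by apply/eqP => U0; have := mem_head x s; rewrite -mem_undup -/U U0.
have -> : bigmeet x s = meet_seq U x.
  apply: le_anti; apply/andP; split.
    apply: le_meet_seqP => // u; rewrite mem_undup => uX.
    exact: (meet_seq_le x uX).
  apply: (@le_meet_seqP _ _ _ (x :: s) x) => // u uX.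
  by apply: meet_seq_le; rewrite mem_undup.
case E : U U0 => [|y t] // _; rewrite /meet_seq /=; apply: H.
- by rewrite -mem_undup -/U E mem_head.
- by move=> u ut; rewrite -mem_undup -/U E inE ut orbT.
- have : (size U <= #|M|)%N.
    by move/card_uniqP: (undup_uniq (x :: s)) => <-; apply: max_card.
  by rewrite E => /leqW.
Qed.

Section JoinSet.
Context {d : Order.disp_t} {A : distrLatticeType d}.
Variables (k : nat) (f0 : A) (o : nat -> A).
Hypothesis o_disjoint : forall i j, (i < k)%N -> (j < k)%N -> i != j -> o i `&` o j <= f0.
Implicit Types (T : {set 'I_k}).

Definition join_set T : A := join_idx f0 o [seq val i | i <- enum T].

Lemma join_set_le T w : join_set T <= w <-> f0 <= w /\ forall i : 'I_k, i \in T -> o i <= w.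
Proof.
rewrite /join_set join_idx_le; split.
  by case/andP=> f0w /allP H; split => // i iT; apply/H/map_f; rewrite mem_enum.
case=> f0w H; rewrite f0w; apply/allP => j /mapP[i]; rewrite mem_enum => iT ->.
exact: H.
Qed.

Lemma le_join_set_base T : f0 <= join_set T.
Proof. exact: le_join_idx_base. Qed.

Lemma le_join_set T (i : 'I_k) : i \in T -> o i <= join_set T.
Proof. by move=> iT; apply/le_join_idx/map_f; rewrite mem_enum. Qed.

Lemma join_set_mono T T' : T \subset T' -> join_set T <= join_set T'.
Proof.
move=> /subsetP sub; apply/join_set_le; split; first exact: le_join_set_base.
by move=> i iT; apply/le_join_set/sub.
Qed.

Lemma join_set0 : join_set set0 = f0.
Proof. by rewrite /join_set enum_set0. Qed.

Lemma join_setU T T' : join_set (T :|: T') = join_set T `|` join_set T'.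
Proof.
apply: le_anti; rewrite leUx !join_set_mono ?subsetUl ?subsetUr //= andbT.
apply/join_set_le; split; first by apply: le_trans (le_join_set_base T) (leUl _ _).
move=> i; rewrite in_setU => /orP[iT|iT].
  by apply: le_trans (le_join_set iT) (leUl _ _).
by apply: le_trans (le_join_set iT) (leUr _ _).
Qed.

Lemma meet_join_set T (i : 'I_k) : o i `&` join_set T <= join_set (T :&: [set i]).
Proof.
rewrite meetC /join_set join_idx_meetr join_idx_le; apply/andP; split.
  by apply: le_trans (leIl _ _) (le_join_set_base _).
apply/allP => j /mapP[j' j'T ->]; rewrite mem_enum in j'T.
case: (eqVneq j' i) => [<-|ji].
  by apply: le_trans (leIl _ _) _; apply: le_join_set; rewrite in_setI in_set1 eqxx j'T.
apply: le_trans (o_disjoint (ltn_ord j') (ltn_ord i) _) (le_join_set_base _).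
by apply: contra ji => /eqP /val_inj ->.
Qed.

Lemma join_setI T T' : join_set (T :&: T') = join_set T `&` join_set T'.
Proof.
apply: le_anti; rewrite lexI !join_set_mono ?subsetIl ?subsetIr //=.
rewrite /join_set join_idx_meetr join_idx_le; apply/andP; split.
  by apply: le_trans (leIl _ _) (le_join_set_base _).
apply/allP => j /mapP[i iT ->]; rewrite mem_enum in iT.
apply: le_trans (meet_join_set T' i) _; apply: join_set_mono.
apply/subsetP => x; rewrite !in_setI in_set1 => /andP[xT' /eqP xi].
by rewrite xT' xi iT.
Qed.

End JoinSet.

Section FilterClass.
Variable K : fclass.
Arguments K : clear implicits.
Hypothesis fK : filter_class K.

(* Separate every [a] outside [F] by a homomorphism into the subsets of ['I_n]. *)
Lemma nfilter_subclass n : K _ {set 'I_n.+1} (@nonempty_set n.+1) -> subclass (DL_n n.+1) K.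
Proof.
move=> KB d L F /nfilterP [up R].
have [H HP] : {H : {a : L | ~ F a} -> L -> {set 'I_n.+1} & forall a,
    [/\ lhom (H a), forall x, F x -> H a x != set0 & H a (sval a) = set0]}.
  apply: (choice (P := fun a (Ha : L -> {set 'I_n.+1}) =>
    [/\ lhom Ha, forall x, F x -> Ha x != set0 & Ha (sval a) = set0])).
  by move=> -[a Fa]; apply: nfilter_separation.
have := @filter_class_subdirect K fK {a : L | ~ F a} (fun _ => Order.SetSubsetOrder.subset_display)
  (fun _ => {set 'I_n.+1}) (fun _ => @nonempty_set n.+1) (fun _ => KB) _ L H
  (fun a => let: And3 h _ _ := HP a in h).
move/class_ext; apply => x; split; last by move=> Fx a; have [_ h _] := HP a; apply: h.
move=> Hx; apply: NNPP => Fx; have := Hx (exist _ x Fx).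
by have [_ _ ->] := HP (exist _ x Fx); rewrite /nonempty_set eqxx.
Qed.

(* If [o 0], ..., [o (k-1)] lie in [F] and pairwise meet below [f0] outside [F],
   then [join_set] embeds [{set 'I_k}] into [A], pulling [F] back to the
   nonempty sets. *)
Lemma subsets_in_class d (A : distrLatticeType d) (F : A -> Prop) k (f0 : A) (o : nat -> A) :
  (forall i j, (i < k)%N -> (j < k)%N -> i != j -> o i `&` o j <= f0) ->
  K _ A F -> upset F -> ~ F f0 -> (forall i, (i < k)%N -> F (o i)) ->
  K _ {set 'I_k} (@nonempty_set k).
Proof.
move=> oo KA up Ff0 Fo; case: fK => _ subK _ _.
pose js := join_set f0 o (k := k).
have js_sub T T' : js T = js T' -> T \subset T'.
  move=> e; apply/subsetP => i iT; apply: NNPP => niT'.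
  have : o i <= js (T' :&: [set i]).
    by apply: le_trans (meet_join_set oo T' i); rewrite lexI lexx /= -/js -e le_join_set.
  have -> : T' :&: [set i] = set0.
    by apply/setP => x; rewrite !inE; apply/negP => /andP[xT' /eqP xi]; apply: niT'; rewrite -xi.
  by rewrite /js join_set0 => /(up _ _ (Fo i (ltn_ord i))).
have js_inj : injective js by move=> T T' e; apply/eqP; rewrite eqEsubset !js_sub.
apply: class_ext (subK _ A F _ {set 'I_k} js _ js_inj KA) _.
  by move=> T T'; split; [exact: join_setI | exact: join_setU].
move=> T; split.
  by move=> FT; apply/negP => /eqP T0; apply: Ff0; rewrite T0 /js join_set0 in FT.
by case/set0Pn => i iT; apply: up (Fo i (ltn_ord i)) _; exact: le_join_set.
Qed.

Lemma not_nfilter_subsets d (A : distrLatticeType d) (F : A -> Prop) m :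
  K _ A F -> upset F -> ~ n_filter m F -> K _ {set 'I_m.+1} (@nonempty_set m.+1).
Proof.
move=> KA up; case: m => [|m] nF.
  have [b Fb] : exists b, F b.
    by apply: NNPP => nb; apply: nF; left => x Fx; apply: nb; exists x.
  have [c Fc] : exists c, ~ F c.
    by apply: NNPP => nc; apply: nF; right => x; apply: NNPP => Fx; apply: nc; exists x.
  apply: (@subsets_in_class _ A F 1 (c `&` b) (fun _ => b)) => //.
  - by move=> [|i] [|j].
  - by move=> Fcb; apply: Fc; apply: up Fcb (leIl _ _).
have [z [Hz nFz]] : exists z, (forall i, (i <= m.+1)%N -> F (meet_but z m.+1 i)) /\
    ~ F (meet_upto z m.+1).
  apply: NNPP => nex; apply: nF; apply/nfilterP; split => // z Hz.
  by apply: NNPP => nFz; apply: nex; exists z.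
apply: (@subsets_in_class _ A F m.+2 (meet_upto z m.+1) (meet_but z m.+1)) => //.
move=> i j _ _ ij; apply/le_meet_upto => l lm.
case: (eqVneq l i) => [li|li].
  by rewrite li in lm *; apply: le_trans (leIr _ _) _; apply: meet_but_le.
by apply: le_trans (leIl _ _) _; apply: meet_but_le.
Qed.

Lemma DL_omega_subclass :
  (forall n, K _ {set 'I_n.+1} (@nonempty_set n.+1)) -> subclass DL_omega K.
Proof.
move=> KB d L F [up [J [e [M [h [G [hG FG]]]]]]].
have KM j : K _ (M j) (G j).
  by apply: (nfilter_subclass (KB _)); apply: finite_upset_nfilter; case: (hG j).
have := @filter_class_subdirect K fK J e (fun j => M j : distrLatticeType (e j)) G KM _ L h
  (fun j => proj1 (hG j)).
by move/class_ext; apply => x; split => /FG.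
Qed.

Lemma DL0_subclass : ~ trivial_class K -> subclass (DL_n 0) K.
Proof.
move=> ntK d L F [emp|full].
  have [d' [A [F' [KA [c Fc]]]]] :
      exists d' (A : distrLatticeType d') (F' : A -> Prop), K _ A F' /\ exists c, ~ F' c.
    apply: NNPP => nex; apply: ntK => d' A F' KA x; apply: NNPP => Fx; apply: nex.
    by exists d', A, F'; split => //; exists x.
  by apply: class_ext (filter_class_empty L fK KA Fc) _ => x; split => // /emp.
by apply: class_ext (filter_class_full L fK) _ => x; split => // _; apply: full.
Qed.

(* Either [K] contains every [<{set 'I_n}, nonempty>], or [K = DL_n] for the
   least [n] such that [K] misses [<{set 'I_(n+1)}, nonempty>]. *)
Lemma filter_class_dichotomy : ~ trivial_class K -> subclass K DL_inf ->
  subclass DL_omega K \/ exists n : nat, same_class K (DL_n n).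
Proof.
move=> ntK sKi.
case: (classic (forall n, K _ {set 'I_n.+1} (@nonempty_set n.+1))) => KB.
  by left; apply: DL_omega_subclass.
right; pose P n := `[< ~ K _ {set 'I_n.+1} (@nonempty_set n.+1) >].
have exP : exists n, P n.
  apply: NNPP => nex; apply: KB => n; apply: NNPP => nK; apply: nex; exists n.
  exact/asboolP.
case: (ex_minnP exP) => n /asboolP nKn nmin; exists n => d L F; split.
  move=> KF; apply: NNPP => nF; apply: nKn.
  exact: not_nfilter_subsets KF (sKi _ L F KF) nF.
case: n nKn nmin => [|n] _ nmin; first exact: DL0_subclass.
apply: nfilter_subclass; apply: NNPP => nK.
by have := nmin n (introT (asboolP _) nK); rewrite ltnn.
Qed.

End FilterClass.

Section LHom.
Context {d1 d2 : Order.disp_t} {A : distrLatticeType d1} {B : distrLatticeType d2}.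
Variable h : A -> B.
Hypothesis hh : lhom h.

Lemma lhom_meet_idx b (z : nat -> A) S : h (meet_idx b z S) = meet_idx (h b) (h \o z) S.
Proof. by elim: S => [|k S IH] //=; rewrite (proj1 (hh _ _)) IH. Qed.

Lemma lhom_le x y : x <= y -> h x <= h y.
Proof. by move/meet_idPl => e; apply/meet_idPl; rewrite -(proj1 (hh _ _)) e. Qed.

Lemma meet_rule_preimage n (F : B -> Prop) : meet_rule n F -> meet_rule n (F \o h).
Proof. by move=> R z Hz; rewrite /= lhom_meet_idx; apply: R => i /Hz; rewrite /= lhom_meet_idx. Qed.

Lemma nfilter_preimage n (F : B -> Prop) : n_filter n F -> n_filter n (F \o h).
Proof.
case: n => [[emp|full]|n]; [by left => x /emp | by right => x; apply: full |].
case/nfilterP => up R; apply/nfilterP; split; last exact: meet_rule_preimage.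
by move=> x y Fx xy; apply: up Fx (lhom_le xy).
Qed.

End LHom.

Lemma DL_n_filter_class n : filter_class (DL_n n).
Proof.
split.
- move=> d1 A F d2 B h hh [g hg gh] KF.
  have gg : lhom g.
    by move=> x y; split; apply: (can_inj hg); rewrite ?(proj1 (hh _ _)) ?(proj2 (hh _ _)) !gh.
  apply: class_ext (nfilter_preimage gg KF) _ => b; split.
    by move=> Fgb; exists (g b); rewrite gh.
  by case=> a [<- Fa]; rewrite /= hg.
- by move=> d1 A F d2 B e he _; apply: nfilter_preimage.
- move=> I dI A F KA dB B p hp _ _; case: n KA => [|n] KA.
    case: (classic (exists i, forall x, ~ F i x)) => [[i emp]|nemp].
      by left => b /(_ i) /emp.
    by right => b i; case: (KA i) => // emp; case: nemp; exists i.
  apply/nfilterP; split.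
    move=> x y Fx xy i; have [up _] := (nfilterP _ _).1 (KA i).
    exact: up (Fx i) (lhom_le (hp i) xy).
  move=> z Hz i; have [_ R] := (nfilterP _ _).1 (KA i).
  exact: (meet_rule_preimage (hp i) R (fun j jn => Hz j jn i)).
- by move=> d1 A d2 B G h hh _; apply: nfilter_preimage.
Qed.

Lemma ultrafilter_forall_le (I : Type) (U : (I -> Prop) -> Prop) n (P : nat -> I -> Prop) :
  ultrafilter U -> (forall j, (j <= n)%N -> U (P j)) ->
  U (fun i => forall j, (j <= n)%N -> P j i).
Proof.
case=> _ _ Um Ui _; elim: n => [|n IH] H.
  by apply: Um (H 0 isT) _ => i Pi [|j].
apply: Um (Ui _ _ (IH (fun j jn => H j (leqW jn))) (H n.+1 (leqnn _))) _ => i [H1 H2] j.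
by rewrite leq_eqVlt => /orP[/eqP -> //|]; apply: H1.
Qed.

(* Choose representatives [r k] of the [z k]; the rule transfers to the
   ultraproduct because only the finitely many indices [0..n+1] are involved. *)
Lemma DL_n_ultraprod_closed n : ultraprod_closed (DL_n n).
Proof.
move=> I U dI A F UU KA dB B h hh hs hk; have [UT UF Um Ui Uu] := UU.
case: n KA => [|n] KA.
  case: (Uu (fun i => forall x, F i x)) => [Uf|Un].
    by right => b; have [a <-] := hs b; exists a; split => //; apply: Um Uf _ => i; apply.
  left => b [a [_ Ua]]; apply: UF; apply: Um (Ui _ _ Ua Un) _ => i [Fa nf].
  by case: (KA i) => [emp|full]; [exact: emp _ Fa | exact: nf full].
apply/nfilterP; split.
  move=> b b' [a [ha Ua]] bb'; have [a' ha'] := hs b'; exists a'; split => //.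
  have /(hk _ _) Ue : h (fun i => a i `&` a' i) = h a.
    by rewrite (proj1 (hh a a')) ha ha'; apply/meet_idPl.
  apply: Um (Ui _ _ Ua Ue) _ => i [Fa eq].
  have [up _] := (nfilterP _ _).1 (KA i).
  by apply: up Fa _; apply/meet_idPl.
move=> z Hz; have [r hr] := choice (fun k => hs (z k)).
have h_meet k0 S : h (fun i => meet_idx (r k0 i) (fun k => r k i) S) = meet_idx (z k0) z S.
  elim: S => [|k S IH] /=; first exact: hr.
  by rewrite (proj1 (hh (r k) (fun i => meet_idx (r k0 i) (fun k => r k i) S))) IH hr.
have Ubut j : (j <= n.+1)%N -> U (fun i => F i (meet_but (fun k => r k i) n.+1 j)).
  move=> jn; have [a [ha Ua]] := Hz j jn.
  have /(hk _ _) Ue : h a = h (fun i => meet_but (fun k => r k i) n.+1 j).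
    by rewrite ha; symmetry; apply: h_meet.
  by apply: Um (Ui _ _ Ua Ue) _ => i [Fa <-].
exists (fun i => meet_upto (fun k => r k i) n.+1); split; first exact: h_meet.
apply: Um (ultrafilter_forall_le UU Ubut) _ => i Hi.
by have [_ R] := (nfilterP _ _).1 (KA i); apply: R.
Qed.

Lemma DL_n_nontrivial n : ~ trivial_class (DL_n n).
Proof.
move=> T; apply: (T _ bool (fun _ => False) _ true); case: n {T} => [|n]; first by left => x.
by apply/nfilterP; split => // z /(_ 0 isT).
Qed.

Lemma DL_n_subclass_inf n : subclass (DL_n n) DL_inf.
Proof.
move=> d L F; case: n => [[emp|full]|n]; [by move=> x y /emp | by move=> x y _ _; apply: full |].
by case/nfilterP.
Qed.

Lemma subset_leE n (T T' : {set 'I_n}) : (T <= T') = (T \subset T').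
Proof. by []. Qed.

Lemma DL_inf_not_subclass_DL_n n : ~ subclass DL_inf (DL_n n).
Proof.
move=> S; have := S _ {set 'I_n.+1} (@nonempty_set n.+1) (@nonempty_set_upset n.+1).
case: n {S} => [[emp|full]|n].
- by apply: (emp setT); apply/set0Pn; exists ord0; rewrite inE.
- by have := full set0; rewrite /nonempty_set eqxx.
(* With [z j] the complement of [{j}], every meet of [n+1] of the [z j] is
   nonempty while the meet of all of them is empty. *)
case/nfilterP => _ R; pose z j : {set 'I_n.+2} := [set i : 'I_n.+2 | (i : nat) != j].
have /set0Pn[i ifm] : nonempty_set (meet_upto z n.+1).
  apply: R => j jn; apply/set0Pn; exists (inord j).
  suff : [set inord j : 'I_n.+2] <= meet_but z n.+1 j by rewrite subset_leE sub1set.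
  apply/le_meet_but => // k kn kj.
  by rewrite subset_leE sub1set inE inordK // eq_sym.
have := meet_upto_le z (ltn_ord i : (val i <= n.+1)%N).
by rewrite subset_leE => /subsetP/(_ i ifm); rewrite inE eqxx.
Qed.

Section UpsetGen.
Context {d : Order.disp_t} {L : distrLatticeType d}.
Variable F : L -> Prop.

Definition upset_gen (S : seq L) (x : L) := exists s, [/\ s \in S, F s & s <= x].

(* Among [|S|+2] witnesses in [S], two coincide (pigeonhole); the common witness
   lies below every [z k], hence below the full meet. *)
Lemma upset_gen_meet_rule S : meet_rule (size S).+1 (upset_gen S).
Proof.
set n := (size S).+1 => z Hz.
have [s sP] : {s : nat -> L & forall i, (i <= n)%N ->
    [/\ s i \in S, F (s i) & s i <= meet_but z n i]}.
  apply: (choice (P := fun i si => (i <= n)%N -> [/\ si \in S, F si & si <= meet_but z n i])).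
  move=> i; case: (leqP i n) => iN; first by have [si Hs] := Hz i iN; exists si.
  by have [si Hs] := Hz 0 isT; exists si.
have nu : ~~ uniq [seq index (s i) S | i <- iota 0 n.+1].
  apply/negP => u.
  have sub : {subset [seq index (s i) S | i <- iota 0 n.+1] <= iota 0 (size S)}.
    move=> j /mapP[i]; rewrite mem_iota => /andP[_ iN] ->.
    by rewrite mem_iota add0n index_mem; have [-> _ _] := sP i iN.
  by have := uniq_leq_size u sub; rewrite size_map !size_iota /n ltnNge leqW.
have [i [j [ij jn e]]] := uniqPn 0 nu.
rewrite size_map size_iota in jn; have iN : (i < n.+1)%N by apply: ltn_trans jn.
rewrite !(nth_map 0) ?size_iota // !nth_iota // !add0n in e.
have [siS Fsi sio] := sP i iN; have [sjS Fsj sjo] := sP j jn.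
have eij : s i = s j by rewrite -(nth_index (s i) siS) e nth_index.
exists (s i); split => //; apply/le_meet_upto => k kn.
case: (eqVneq k i) => [ki|ki]; last by apply: le_trans sio _; apply: meet_but_le.
rewrite ki eij; apply: le_trans sjo _; apply: meet_but_le => //.
by rewrite neq_ltn ij.
Qed.

Lemma upset_gen_nfilter S : n_filter (size S).+1 (upset_gen S).
Proof.
apply/nfilterP; split; last exact: upset_gen_meet_rule.
by move=> x y [s [sS Fs sx]] xy; exists s; split => //; apply: le_trans xy.
Qed.

End UpsetGen.

Lemma ultrafilter_seq_cones (T : eqType) : exists U : (seq T -> Prop) -> Prop,
  ultrafilter U /\ forall x, U (fun S => x \in S).
Proof.
pose Fb (X : seq T -> Prop) := exists S0 : seq T, forall S, {subset S0 <= S} -> X S.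
have PF : filter.ProperFilter Fb.
  apply: filter.Build_ProperFilter; first by case=> S0 /(_ S0) H; apply: H.
  apply: filter.Build_Filter.
  - by exists [::].
  - move=> X Y [S0 H0] [S1 H1]; exists (S0 ++ S1) => S sub; split.
      by apply: H0 => x xS; apply: sub; rewrite mem_cat xS.
    by apply: H1 => x xS; apply: sub; rewrite mem_cat xS orbT.
  - by move=> X Y XY [S0 H0]; exists S0 => S sub; apply: XY; apply: H0.
have [U [UU FU]] := filter.ultraFilterLemma PF.
have [[Un [UT UI US]] _] := UU.
exists U; split.
  split.
  - exact: UT.
  - exact: Un.
  - by move=> X Y UX XY; apply: US UX.
  - by move=> X Y; apply: UI.
  - by move=> X; apply: filter.in_ultra_setVsetC.
by move=> x; apply: FU; exists [:: x] => S /(_ x); apply; rewrite mem_head.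
Qed.

Section Ultrapower.
Variables (I : Type) (U : (I -> Prop) -> Prop).
Hypothesis UU : ultrafilter U.
Context {d : Order.disp_t} {L : distrLatticeType d}.
Local Notation P := (prod_dl (fun _ : I => L)).

Let UT : U (fun _ => True). Proof. by case: UU. Qed.
Let Um : forall X Y : I -> Prop, U X -> (forall i, X i -> Y i) -> U Y. Proof. by case: UU. Qed.
Let Ui : forall X Y : I -> Prop, U X -> U Y -> U (fun i => X i /\ Y i). Proof. by case: UU. Qed.

Definition ueq (a b : P) := U (fun i => a i = b i).

Lemma ueq_refl a : ueq a a. Proof. exact: Um UT _. Qed.
Lemma ueq_sym a b : ueq a b -> ueq b a. Proof. by move/Um; apply => i ->. Qed.
Lemma ueq_trans a b c : ueq a b -> ueq b c -> ueq a c.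
Proof. by move=> r1 r2; apply: Um (Ui r1 r2) _ => i [-> ->]. Qed.

Definition uclass_type := {C : P -> Prop | exists a, C = ueq a}.
Definition uclass (a : P) : uclass_type := exist _ (ueq a) (ex_intro _ a erefl).

Lemma uclass_ind (Q : uclass_type -> Prop) : (forall a, Q (uclass a)) -> forall C, Q C.
Proof.
by move=> Qa [C [a e]]; have -> : exist _ C (ex_intro _ a e) = uclass a by apply: sig_eq.
Qed.

Lemma uclass_surj C : exists a, uclass a = C.
Proof. by elim/uclass_ind: C => a; exists a. Qed.

Lemma uclass_eq a b : uclass a = uclass b <-> ueq a b.
Proof.
split=> [e|r].
  have : sval (uclass b) b by apply: ueq_refl.
  by rewrite -e.
apply: sig_eq; apply: funext => c; apply: propext; split.
  exact: ueq_trans (ueq_sym r).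
exact: ueq_trans r.
Qed.

Definition urepr (C : uclass_type) : P := sval (cid (svalP C)).

Lemma urepr_ueq a : ueq (urepr (uclass a)) a.
Proof. by apply/uclass_eq; rewrite /urepr; case: cid => b e; apply: sig_eq. Qed.

Definition umeet C C' := uclass (urepr C `&` urepr C').
Definition ujoin C C' := uclass (urepr C `|` urepr C').

Lemma umeetE a b : umeet (uclass a) (uclass b) = uclass (a `&` b).
Proof.
apply/uclass_eq; apply: Um (Ui (urepr_ueq a) (urepr_ueq b)) _ => i [ea eb].
by rewrite !prod_meetE ea eb.
Qed.

Lemma ujoinE a b : ujoin (uclass a) (uclass b) = uclass (a `|` b).
Proof.
apply/uclass_eq; apply: Um (Ui (urepr_ueq a) (urepr_ueq b)) _ => i [ea eb].
by rewrite !prod_joinE ea eb.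
Qed.

Lemma ultrapower_laws : dl_laws umeet ujoin.
Proof.
split; do ![elim/uclass_ind => ?]; rewrite !(umeetE, ujoinE).
- by rewrite meetC. - by rewrite joinC. - by rewrite meetA. - by rewrite joinA.
- by rewrite joinKI. - by rewrite meetKU. - by rewrite meetUl.
Qed.

Definition ultrapower := dl_of ultrapower_laws.

End Ultrapower.

(* [F] is the ultraproduct, along an ultrafilter containing every cone
   [{S | x \in S}], of the upsets generated by the finite pieces of [F];
   the diagonal map embeds [L] into the ultrapower. *)
Lemma finitary_DL_inf_subclass (K : fclass) : finitary K ->
  (forall n, K _ {set 'I_n.+1} (@nonempty_set n.+1)) -> subclass DL_inf K.
Proof.
move=> [fK uK] KB d L F up.
have [U [UU cone]] := ultrafilter_seq_cones L; have [UT UF Um Ui _] := UU.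
have KS (S : seq L) : K _ L (upset_gen F S).
  exact: (nfilter_subclass fK (KB (size S)) (upset_gen_nfilter F S)).
pose UP := ultrapower UU (L := L).
have KUP := uK (seq L) U (fun _ => d) (fun _ => L) (upset_gen F) UU KS _ UP
  (@uclass _ U _ L) (fun a a' => conj (esym (umeetE UU a a')) (esym (ujoinE UU a a')))
  (@uclass_surj _ U _ L) (uclass_eq UU).
pose diag (x : L) : UP := uclass U (fun _ => x).
have diag_lhom : lhom diag.
  by move=> x y; split; [exact: (esym (umeetE UU _ _)) | exact: (esym (ujoinE UU _ _))].
have diag_inj : injective diag.
  move=> x y /(uclass_eq UU) r; apply: NNPP => xy; apply: UF.
  by apply: Um r _ => S.
case: fK => _ subK _ _; apply: class_ext (subK _ _ _ _ _ diag diag_lhom diag_inj KUP) _.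
move=> x; split.
  case=> a [/(uclass_eq UU) r Ua]; apply: NNPP => Fx; apply: UF.
  apply: Um (Ui _ _ r Ua) _ => S [eS [s [sS Fs sx]]]; apply: Fx.
  by apply: up Fs _; rewrite -eS.
move=> Fx; exists (fun _ => x); split => //.
by apply: Um (cone x) _ => S xS; exists x.
Qed.

Lemma subsets_DL_omega n : DL_omega (@nonempty_set n).
Proof.
split; first exact: nonempty_set_upset.
exists unit, (fun _ => Order.SetSubsetOrder.subset_display),
  (fun _ => ({set 'I_n} : finDistrLatticeType _)), (fun _ x => x), (fun _ => @nonempty_set n).
split; last by move=> x; split => [H []|/(_ tt)].
by move=> _; split; [move=> x y | exact: nonempty_set_upset].
Qed.

Theorem mainTheorem12 :
  (forall K : fclass,
      filter_class K -> ~ trivial_class K -> subclass K DL_inf ->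
      subclass DL_omega K \/ exists n : nat, same_class K (DL_n n)) /\
  (forall K : fclass,
      (finitary K /\ ~ trivial_class K /\ ~ subclass DL_inf K /\ subclass K DL_inf)
      <-> exists n : nat, same_class K (DL_n n)).
Proof.
split=> [K fK|K]; first exact: filter_class_dichotomy.
split=> [[fin [ntK [notinf sub]]]|[n sameK]].
  case: (filter_class_dichotomy (proj1 fin) ntK sub) => // omega.
  case: notinf; apply: finitary_DL_inf_subclass => // n.
  exact: omega _ _ _ (subsets_DL_omega n.+1).
have -> : K = DL_n n.
  apply: functional_extensionality_dep => d; apply: functional_extensionality_dep => L.
  by apply: funext => F; apply: propext; apply: sameK.
split; first exact: conj (DL_n_filter_class n) (@DL_n_ultraprod_closed n).
split; first exact: DL_n_nontrivial.
by split; [exact: DL_inf_not_subclass_DL_n | exact: DL_n_subclass_inf].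
Qed.
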